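(* If a topologically mixing homeomorphism $f$ of a compact metric space has the L-shadowing property, then it has the two-sided limit shadowing property.
   Context: L-shadowing: for every $\varepsilon>0$ there is $\delta>0$ such that every sequence $(x_k)_{k\in\mathbb{Z}}$ with $d(f(x_k),x_{k+1})\le\delta$ for all $k$ and $d(f(x_k),x_{k+1})\to0$ as $|k|\to\infty$ admits $z$ with $d(f^k(z),x_k)\le\varepsilon$ for all $k$ and $d(f^k(z),x_k)\to0$ as $|k|\to\infty$. Two-sided limit shadowing: for every $(x_k)_{k\in\mathbb{Z}}$ with $d(f(x_k),x_{k+1})\to0$ as $|k|\to\infty$ there is $y$ with $d(f^k(y),x_k)\to0$ as $|k|\to\infty$. Topologically mixing: for all nonempty open $U,V$ there is $N$ with $f^k(U)\cap V\ne\emptyset$ for all $k\ge N$. *)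

From Stdlib Require Import Reals ZArith.
Open Scope R_scope.

Record MetricSpace := {
  msX :> Type;
  msd : msX -> msX -> R;
  msd_nonneg : forall x y, 0 <= msd x y;
  msd_eq0 : forall x y, msd x y = 0 <-> x = y;
  msd_sym : forall x y, msd x y = msd y x;
  msd_tri : forall x y z, msd x z <= msd x y + msd y z
}.

Section Metric.
Variable M : MetricSpace.
Let d := msd M.

Definition is_open (U : M -> Prop) : Prop :=
  forall x, U x -> exists r, 0 < r /\ forall y, d x y < r -> U y.

Definition compact_space : Prop :=
  forall (I : Type) (U : I -> M -> Prop),
    (forall i, is_open (U i)) ->
    (forall x, exists i, U i x) ->
    exists l : list I, forall x, exists i, List.In i l /\ U i x.

Definition continuous (f : M -> M) : Prop :=
  forall x eps, 0 < eps -> exists delta, 0 < delta /\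
    forall y, d x y < delta -> d (f x) (f y) < eps.

Definition homeomorphism (f : M -> M) : Prop :=
  continuous f /\ exists g : M -> M,
    continuous g /\ (forall x, g (f x) = x) /\ (forall x, f (g x) = x).

Fixpoint iter_nat (f : M -> M) (n : nat) (x : M) : M :=
  match n with O => x | S n => f (iter_nat f n x) end.

Definition iterZ (f finv : M -> M) (k : Z) (x : M) : M :=
  match k with
  | Z0 => x
  | Zpos p => iter_nat f (Pos.to_nat p) x
  | Zneg p => iter_nat finv (Pos.to_nat p) x
  end.

Definition tends_to_zero_Z (u : Z -> R) : Prop :=
  forall eps, 0 < eps -> exists N : Z,
    forall k : Z, (N <= Z.abs k)%Z -> Rabs (u k) < eps.

Definition image (f : M -> M) (U : M -> Prop) : M -> Prop :=
  fun y => exists x, U x /\ f x = y.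

Definition topologically_mixing (f : M -> M) : Prop :=
  forall U V : M -> Prop, is_open U -> is_open V ->
    (exists x, U x) -> (exists x, V x) ->
    exists N : nat, forall k : nat, (N <= k)%nat ->
      exists y, image (iter_nat f k) U y /\ V y.

Definition L_shadowing (f finv : M -> M) : Prop :=
  forall eps, 0 < eps -> exists delta, 0 < delta /\
    forall xs : Z -> M,
      (forall k, d (f (xs k)) (xs (k + 1)%Z) <= delta) ->
      tends_to_zero_Z (fun k => d (f (xs k)) (xs (k + 1)%Z)) ->
      exists z : M,
        (forall k, d (iterZ f finv k z) (xs k) <= eps) /\
        tends_to_zero_Z (fun k => d (iterZ f finv k z) (xs k)).

Definition two_sided_limit_shadowing (f finv : M -> M) : Prop :=
  forall xs : Z -> M,
    tends_to_zero_Z (fun k => d (f (xs k)) (xs (k + 1)%Z)) ->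
    exists y : M, tends_to_zero_Z (fun k => d (iterZ f finv k y) (xs k)).

End Metric.

(* Let (x_k) be a two-sided limit pseudo-orbit and let δ be the L-shadowing
   constant for ε = 1.  Choose A so large that the jumps d(f x_k, x_{k+1})
   are below δ for |k| >= A.  Only the finitely many jumps inside the window
   (-A, B) may be large, so we cut them out: by compactness, mixing is
   uniform in the target point, hence there is an orbit segment w, f w, ...,
   f^n w starting δ-close to f(x_{-A}) and ending δ-close to x_B.  Splicing
   this segment into the window gives a sequence z which is a δ-pseudo-orbit,
   agrees with x outside the window, and is therefore still a two-sided limit
   pseudo-orbit.  L-shadowing yields a point y whose orbit is asymptotic to z
   at both ends, hence asymptotic to x. *)

From Stdlib Require Import Reals ZArith Lra Lia List.
Open Scope R_scope.

Lemma msd_refl (M : MetricSpace) (x : M) : msd M x x = 0.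
Proof. exact (proj2 (msd_eq0 M x x) eq_refl). Qed.

Lemma ball_open (M : MetricSpace) (c : M) (r : R) :
  is_open M (fun y => msd M c y < r).
Proof.
  intros x Hx. exists (r - msd M c x). split; [lra|].
  intros y Hy. pose proof (msd_tri M c x y). lra.
Qed.

Lemma mixing_finite_targets (M : MetricSpace) (f : M -> M)
    (U : M -> Prop) (r : R) (l : list M) :
  topologically_mixing M f -> is_open M U -> (exists x, U x) -> 0 < r ->
  exists N, forall c, In c l -> forall k, (N <= k)%nat ->
    exists y, image M (iter_nat M f k) U y /\ msd M c y < r.
Proof.
  intros Hmix HU HUne Hr. induction l as [|c l IH].
  - exists 0%nat. intros c [].
  - destruct IH as [N1 HN1].
    destruct (Hmix U (fun y => msd M c y < r) HU (ball_open M c r) HUne)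
      as [N2 HN2].
    { exists c. rewrite msd_refl. exact Hr. }
    exists (Nat.max N1 N2). intros c' [<-|Hin] k Hk.
    + apply HN2; lia.
    + apply HN1; [exact Hin | lia].
Qed.

Lemma mixing_uniform (M : MetricSpace) (f : M -> M) :
  compact_space M -> topologically_mixing M f ->
  forall (a : M) (r : R), 0 < r -> exists N0 : nat,
    forall j, (N0 <= j)%nat -> forall b : M,
      exists w, msd M a w < r /\ msd M (iter_nat M f j w) b < r.
Proof.
  intros Hc Hmix a r Hr.
  destruct (Hc M (fun c y => msd M c y < r/2)) as [l Hl].
  - intro c; apply ball_open.
  - intro x; exists x. rewrite msd_refl. lra.
  - destruct (mixing_finite_targets M f (fun y => msd M a y < r) (r/2) l
                Hmix (ball_open M a r)) as [N HN].
    + exists a. rewrite msd_refl. exact Hr.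
    + lra.
    + exists N. intros j Hj b.
      destruct (Hl b) as [c [Hin Hcb]].
      destruct (HN c Hin j Hj) as [y [[w [Hw <-]] Hcy]].
      exists w. split; [exact Hw|].
      pose proof (msd_tri M (iter_nat M f j w) c b).
      rewrite msd_sym in Hcy. lra.
Qed.

Lemma tends_to_zero_eventually_eq (u v : Z -> R) (K : Z) :
  (forall k, (K <= Z.abs k)%Z -> u k = v k) ->
  tends_to_zero_Z u -> tends_to_zero_Z v.
Proof.
  intros Heq Hu eps Heps. destruct (Hu eps Heps) as [N HN].
  exists (Z.max N K). intros k Hk. rewrite <- Heq by lia. apply HN. lia.
Qed.

Section Splice.
Variable M : MetricSpace.
Variable f : M -> M.

Definition jump (xs : Z -> M) (k : Z) : R := msd M (f (xs k)) (xs (k + 1)%Z).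

Definition splice (xs : Z -> M) (a b : Z) (w : M) (k : Z) : M :=
  if ((a <? k)%Z && (k <? b)%Z)%bool then iter_nat M f (Z.to_nat (k - a - 1)) w
  else xs k.

Variables (xs : Z -> M) (a b : Z) (w : M).

Lemma splice_out (k : Z) : (k <= a \/ b <= k)%Z -> splice xs a b w k = xs k.
Proof.
  intro Hk. unfold splice.
  destruct (Z.ltb_spec a k), (Z.ltb_spec k b); simpl; auto; lia.
Qed.

Lemma splice_in (k : Z) : (a < k < b)%Z ->
  splice xs a b w k = iter_nat M f (Z.to_nat (k - a - 1)) w.
Proof.
  intro Hk. unfold splice.
  destruct (Z.ltb_spec a k), (Z.ltb_spec k b); simpl; auto; lia.
Qed.

Lemma splice_jump_le (δ : R) :
  (a + 1 < b)%Z ->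
  (forall k, (k < a \/ b <= k)%Z -> jump xs k <= δ) ->
  msd M (f (xs a)) w <= δ ->
  msd M (iter_nat M f (Z.to_nat (b - a - 1)) w) (xs b) <= δ ->
  forall k, jump (splice xs a b w) k <= δ.
Proof.
  intros Hab Hout Hstart Hend k. unfold jump.
  destruct (Z.lt_total k a) as [Hk | [Hk | Hk]].
  - rewrite !splice_out by lia. apply Hout. lia.
  - subst k. rewrite splice_out, splice_in by lia.
    replace (Z.to_nat (a + 1 - a - 1)) with 0%nat by lia. exact Hstart.
  - destruct (Z.lt_total (k + 1) b) as [Hk' | [Hk' | Hk']].
    + rewrite !splice_in by lia.
      replace (Z.to_nat (k + 1 - a - 1)) with (S (Z.to_nat (k - a - 1))) by lia.
      simpl. rewrite msd_refl.
      pose proof (msd_nonneg M (f (xs a)) w). lra.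
    + rewrite Hk', (splice_in k), (splice_out b) by lia.
      change (f (iter_nat M f (Z.to_nat (k - a - 1)) w))
        with (iter_nat M f (S (Z.to_nat (k - a - 1))) w).
      replace (S (Z.to_nat (k - a - 1))) with (Z.to_nat (b - a - 1)) by lia.
      exact Hend.
    + rewrite !splice_out by lia. apply Hout. lia.
Qed.

End Splice.

Theorem mainTheorem10 (M : MetricSpace) (f finv : M -> M) :
  compact_space M ->
  continuous M f -> continuous M finv ->
  (forall x, finv (f x) = x) -> (forall x, f (finv x) = x) ->
  topologically_mixing M f ->
  L_shadowing M f finv ->
  two_sided_limit_shadowing M f finv.
Proof.
  intros Hc _ _ _ _ Hmix HL xs Hx.
  destruct (HL 1 Rlt_0_1) as [δ [Hδ HLs]].
  destruct (Hx δ Hδ) as [N HN].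
  set (A := Z.max N 1).
  assert (small_jumps : forall k, (A <= Z.abs k)%Z -> jump M f xs k <= δ).
  { intros k Hk. pose proof (HN k ltac:(unfold A in *; lia)).
    pose proof (Rle_abs (jump M f xs k)). unfold jump in *. lra. }
  destruct (mixing_uniform M f Hc Hmix (f (xs (- A)%Z)) δ Hδ) as [N0 HN0].
  set (B := (Z.of_nat N0 + A)%Z).
  destruct (HN0 (Z.to_nat (B - - A - 1)) ltac:(unfold B, A; lia) (xs B))
    as [w [Hw1 Hw2]].
  set (z := splice M f xs (- A) B w).
  assert (z_far : forall k, (B <= Z.abs k)%Z -> z k = xs k).
  { intros k Hk. apply splice_out. unfold B, A in *; lia. }
  destruct (HLs z) as [y [_ Hy]].
  - intro k. apply (splice_jump_le M f xs (- A) B w δ); try lra.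
    + unfold B, A; lia.
    + intros j Hj. apply small_jumps. unfold B, A in *; lia.
  - apply (tends_to_zero_eventually_eq (fun k => jump M f xs k) _ (B + 1)).
    + intros k Hk. unfold jump. rewrite !z_far by (unfold B, A in *; lia).
      reflexivity.
    + exact Hx.
  - exists y. refine (tends_to_zero_eventually_eq _ _ B _ Hy).
    intros k Hk. rewrite z_far by exact Hk. reflexivity.
Qed.
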